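(* $SL_3(\mathfrak{o})$ is the union of the sets $$\Gamma_\infty(3)\,u\,d\,\varphi_1(y)\quad (y\in Y(\mathfrak{o}),\ d\in D(3),\ u\in U(3)),$$ $$\Gamma_\infty(3)\,u\,d\,\varphi_2(y_2)\varphi_1(y_1)\quad (y_1,y_2\in Y(\mathfrak{o}),\ y_2\neq I_2,\ d\in D(3),\ u\in U(3)),$$ $$\Gamma_\infty(3)\,u\,d\,\varphi_1(y_3)\varphi_2(y_2)\varphi_1(y_1)\quad (y_1,y_2,y_3\in Y(\mathfrak{o}),\ y_2,y_3\neq I_2,\ d\in D(3),\ u\in U(3)),$$ and this union is disjoint: the three families together form a decomposition of $SL_3(\mathfrak{o})$ into pairwise disjoint sets.
   Context: Let $\omega=e^{2\pi i/3}$, $\mathfrak{o}=\mathbb{Z}[\omega]$, $\mathfrak{o}^\times$ its unit group. Fix representatives of nonzero elements modulo units (''$c\in(\mathfrak{o}-\{0\})/\mathfrak{o}^\times$'') and, for each nonzero $c$, representatives of $\mathfrak{o}/c\mathfrak{o}$ (''$a\in\mathfrak{o}/c\mathfrak{o}$''). $Y(\mathfrak{o})=\{\begin{pmatrix}a&b\\c&d\end{pmatrix}\in SL_2(\mathfrak{o}) : c\in(\mathfrak{o}-\{0\})/\mathfrak{o}^\times,\ a\in\mathfrak{o}/c\mathfrak{o}\}\cup\{I_2\}$. $\Gamma(3)=\{A\in SL_3(\mathfrak{o}):A\equiv I_3\pmod{3\mathfrak{o}}\}$ (entrywise), $\Gamma_\infty(3)$ its subgroup of upper triangular unipotent matrices.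 $D(3)$: diagonal $\mathrm{diag}(i,j,k)$ with $i,j,k\in\mathfrak{o}$, $ijk=1$. $U(3)$: matrices $\begin{pmatrix}1&\alpha&\beta\\&1&\gamma\\&&1\end{pmatrix}$ with $\alpha,\beta,\gamma\in\{0,1,2\}+\{0,1,2\}\omega$. For $y=\begin{pmatrix}a&b\\c&d\end{pmatrix}\in SL_2(\mathfrak{o})$, $\varphi_1(y)=\begin{pmatrix}a&b&0\\c&d&0\\0&0&1\end{pmatrix}$, $\varphi_2(y)=\begin{pmatrix}1&0&0\\0&a&b\\0&c&d\end{pmatrix}$. *)

(* The Eisenstein integers o = Z[omega] are realised inside
   the algebraic complex numbers algC, omega = (-1 + i sqrt 3)/2. *)
From HB Require Import structures.
From mathcomp Require Import all_boot all_order all_algebra all_field.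
Set Implicit Arguments. Unset Strict Implicit. Unset Printing Implicit Defensive.
Import Order.TTheory GRing.Theory Num.Theory.
Local Open Scope ring_scope.

Definition omega : algC := (-1 + 'i * sqrtC 3%:R) / 2%:R.

Definition inO (x : algC) : Prop := exists a b : int, x = a%:~R + b%:~R * omega.

Definition unitO (x : algC) : Prop := inO x /\ exists y, inO y /\ x * y = 1.

Definition dvdO (c x : algC) : Prop := exists q, inO q /\ x = c * q.

Definition reps_nonzero_mod_units (Cs : algC -> Prop) : Prop :=
  (forall c, Cs c -> inO c /\ c <> 0) /\
  (forall x, inO x -> x <> 0 -> exists! c, Cs c /\ exists u, unitO u /\ x = u * c).

Definition reps_mod (c : algC) (Ac : algC -> Prop) : Prop :=
  (forall a, Ac a -> inO a) /\
  (forall x, inO x -> exists! a, Ac a /\ dvdO c (x - a)).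

Definition i0 : 'I_3 := @Ordinal 3 0 isT.
Definition i1 : 'I_3 := @Ordinal 3 1 isT.
Definition i2 : 'I_3 := @Ordinal 3 2 isT.
Definition j0 : 'I_2 := @Ordinal 2 0 isT.
Definition j1 : 'I_2 := @Ordinal 2 1 isT.

Definition SL2o (y : 'M[algC]_2) : Prop := (forall i j, inO (y i j)) /\ \det y = 1.
Definition SL3o (g : 'M[algC]_3) : Prop := (forall i j, inO (g i j)) /\ \det g = 1.

Definition Yo (Cs : algC -> Prop) (As : algC -> algC -> Prop) (y : 'M[algC]_2) : Prop :=
  (SL2o y /\ Cs (y j1 j0) /\ As (y j1 j0) (y j0 j0)) \/ y = 1%:M.

Definition Gamma_inf3 (g : 'M[algC]_3) : Prop :=
  (forall i j : 'I_3, (j < i)%N -> g i j = 0) /\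
  (forall i : 'I_3, g i i = 1) /\
  (forall i j : 'I_3, (i < j)%N -> dvdO 3%:R (g i j)).

Definition D3 (d : 'M[algC]_3) : Prop :=
  (forall i j : 'I_3, i != j -> d i j = 0) /\
  (forall i, inO (d i i)) /\ d i0 i0 * d i1 i1 * d i2 i2 = 1.

Definition R3 (x : algC) : Prop :=
  exists a b : nat, (a < 3)%N /\ (b < 3)%N /\ x = a%:R + b%:R * omega.

Definition U3 (u : 'M[algC]_3) : Prop :=
  (forall i j : 'I_3, (j < i)%N -> u i j = 0) /\
  (forall i : 'I_3, u i i = 1) /\
  (forall i j : 'I_3, (i < j)%N -> R3 (u i j)).

Definition phi1 (y : 'M[algC]_2) : 'M[algC]_3 :=
  \matrix_(i < 3, j < 3)
    if ((i < 2) && (j < 2))%N then y (inord i) (inord j) else (i == j)%:R.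
Definition phi2 (y : 'M[algC]_2) : 'M[algC]_3 :=
  \matrix_(i < 3, j < 3)
    if ((0 < i) && (0 < j))%N then y (inord i.-1) (inord j.-1) else (i == j)%:R.

Inductive piece :=
  | P1 of 'M[algC]_3 & 'M[algC]_3 & 'M[algC]_2
  | P2 of 'M[algC]_3 & 'M[algC]_3 & 'M[algC]_2 & 'M[algC]_2
  | P3 of 'M[algC]_3 & 'M[algC]_3 & 'M[algC]_2 & 'M[algC]_2 & 'M[algC]_2.

Definition valid_piece Cs As (p : piece) : Prop :=
  match p with
  | P1 u d y => U3 u /\ D3 d /\ Yo Cs As y
  | P2 u d y2 y1 => U3 u /\ D3 d /\ Yo Cs As y2 /\ Yo Cs As y1 /\ y2 <> 1%:M
  | P3 u d y3 y2 y1 => U3 u /\ D3 d /\ Yo Cs As y3 /\ Yo Cs As y2 /\ Yo Cs As y1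
                       /\ y2 <> 1%:M /\ y3 <> 1%:M
  end.

Definition piece_mx (p : piece) : 'M[algC]_3 :=
  match p with
  | P1 u d y => u *m d *m phi1 y
  | P2 u d y2 y1 => u *m d *m (phi2 y2 *m phi1 y1)
  | P3 u d y3 y2 y1 => u *m d *m (phi1 y3 *m phi2 y2 *m phi1 y1)
  end.

Definition in_piece (p : piece) (g : 'M[algC]_3) : Prop :=
  exists gam, Gamma_inf3 gam /\ g = gam *m piece_mx p.

(* The proof is a row reduction over the Euclidean ring o.  The bottom row of g in SL_3(o)
   is mu times the bottom row of some y1 in Y(o); right multiplication by phi1(y1)^-1 turns
   it into (0, mu, g_33), which is in turn mu' times the bottom row of some y2 in Y(o), so
   that right multiplication by phi2(y2)^-1 leaves (0, 0, t).  The same step with phi1 clears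
   the middle row, and the remaining upper triangular matrix of SL_3(o) factors uniquely as
   Gamma_inf(3) U(3) D(3), U(3) being a set of residues mod 3.
   Conversely, left multiplication by an upper triangular matrix only rescales the bottom row
   of phi2(y2) phi1(y1) and the middle row of phi1(y) modulo the bottom one, and an element of
   Y(o) is determined by the line through its bottom row: this gives disjointness. *)

From HB Require Import structures.
From mathcomp Require Import all_boot all_order all_algebra all_field.
From mathcomp Require Import ring zify.
Set Implicit Arguments. Unset Strict Implicit. Unset Printing Implicit Defensive.
Import Order.TTheory GRing.Theory Num.Theory.
Local Open Scope ring_scope.

Lemma eq_lincomb1 (R : comRingType) (x y k p q : R) :
  p = q -> x - y = k * (p - q) -> x = y.
Proof. by move=> ->; rewrite subrr mulr0 => /eqP; rewrite subr_eq0 => /eqP. Qed.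

Lemma eq_lincomb2 (R : comRingType) (x y k1 p1 q1 k2 p2 q2 : R) :
  p1 = q1 -> p2 = q2 -> x - y = k1 * (p1 - q1) + k2 * (p2 - q2) -> x = y.
Proof. by move=> -> ->; rewrite !subrr !mulr0 addr0 => /eqP; rewrite subr_eq0 => /eqP. Qed.

Lemma eq_lincomb3 (R : comRingType) (x y k1 p1 q1 k2 p2 q2 k3 p3 q3 : R) :
  p1 = q1 -> p2 = q2 -> p3 = q3 ->
  x - y = k1 * (p1 - q1) + k2 * (p2 - q2) + k3 * (p3 - q3) -> x = y.
Proof.
by move=> -> -> ->; rewrite !subrr !mulr0 !addr0 => /eqP; rewrite subr_eq0 => /eqP.
Qed.

Section ExplicitMatrices.
Variable R : comRingType.
Implicit Types (a b c d e f g h k : R) (y : 'M[R]_2) (M T : 'M[R]_3).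

Definition mx3 a b c d e f g h k : 'M[R]_3 :=
  \matrix_(i < 3, j < 3) nth 0 (nth [::] [:: [:: a; b; c]; [:: d; e; f]; [:: g; h; k]] i) j.
Definition mx2 a b c d : 'M[R]_2 :=
  \matrix_(i < 2, j < 2) nth 0 (nth [::] [:: [:: a; b]; [:: c; d]] i) j.

Lemma mx3E M : M = mx3 (M i0 i0) (M i0 i1) (M i0 i2)
                       (M i1 i0) (M i1 i1) (M i1 i2)
                       (M i2 i0) (M i2 i1) (M i2 i2).
Proof.
apply/matrixP => i j; rewrite !mxE.
case: i => [[|[|[|i]]] Hi] //; case: j => [[|[|[|j]]] Hj] //=;
  by congr (M _ _); exact: val_inj.
Qed.

Lemma mx2E y : y = mx2 (y j0 j0) (y j0 j1) (y j1 j0) (y j1 j1).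
Proof.
apply/matrixP => i j; rewrite !mxE.
by case: i => [[|[|i]] Hi] //; case: j => [[|[|j]] Hj] //=; congr (y _ _); exact: val_inj.
Qed.

Lemma mx3_1 : 1%:M = mx3 1 0 0 0 1 0 0 0 1.
Proof. by rewrite [LHS]mx3E !mxE. Qed.

Lemma det_mx3 a b c d e f g h k :
  \det (mx3 a b c d e f g h k) = a*e*k + b*f*g + c*d*h - c*e*g - a*f*h - b*d*k.
Proof.
rewrite (expand_det_row _ ord0) !big_ord_recl big_ord0 /cofactor.
rewrite !(expand_det_row _ ord0) !big_ord_recl !big_ord0 /cofactor.
by rewrite !det_mx11 !mxE /= /bump /=; ring.
Qed.

Lemma det_mx2 a b c d : \det (mx2 a b c d) = a*d - b*c.
Proof.
rewrite (expand_det_row _ ord0) !big_ord_recl big_ord0 /cofactor.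
by rewrite !det_mx11 !mxE /= /bump /=; ring.
Qed.

Lemma det2E y : \det y = y j0 j0 * y j1 j1 - y j0 j1 * y j1 j0.
Proof. by rewrite {1}[y]mx2E det_mx2. Qed.

Lemma adj2E y : \adj y = mx2 (y j1 j1) (- y j0 j1) (- y j1 j0) (y j0 j0).
Proof.
apply/matrixP => i j; rewrite !mxE /cofactor det_mx11 !mxE.
case: i => [[|[|i]] Hi] //; case: j => [[|[|j]] Hj] //=.
all: rewrite ?expr0 ?expr1 ?mulN1r ?sqrrN ?expr1n ?mul1r.
all: by congr (- y _ _) || congr (y _ _); exact: val_inj.
Qed.

Lemma mul_mx3 a b c d e f g h k a' b' c' d' e' f' g' h' k' :
  mx3 a b c d e f g h k *m mx3 a' b' c' d' e' f' g' h' k' =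
  mx3 (a*a' + b*d' + c*g') (a*b' + b*e' + c*h') (a*c' + b*f' + c*k')
      (d*a' + e*d' + f*g') (d*b' + e*e' + f*h') (d*c' + e*f' + f*k')
      (g*a' + h*d' + k*g') (g*b' + h*e' + k*h') (g*c' + h*f' + k*k').
Proof.
apply/matrixP => i j; rewrite !mxE !big_ord_recl big_ord0 !mxE /=.
by case: i => [[|[|[|i]]] Hi] //; case: j => [[|[|[|j]]] Hj] //=; ring.
Qed.

Lemma mul_mx2 a b c d a' b' c' d' :
  mx2 a b c d *m mx2 a' b' c' d' = mx2 (a*a' + b*c') (a*b' + b*d') (c*a' + d*c') (c*b' + d*d').
Proof.
apply/matrixP => i j; rewrite !mxE !big_ord_recl big_ord0 !mxE /=.
by case: i => [[|[|i]] Hi] //; case: j => [[|[|j]] Hj] //=; ring.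
Qed.

Lemma mx3_inj a b c d e f g h k a' b' c' d' e' f' g' h' k' :
  mx3 a b c d e f g h k = mx3 a' b' c' d' e' f' g' h' k' ->
  [/\ a = a', b = b', c = c', d = d' & [/\ e = e', f = f', g = g', h = h' & k = k']].
Proof.
move=> E; have F i j : mx3 a b c d e f g h k i j = mx3 a' b' c' d' e' f' g' h' k' i j.
  by rewrite E.
move: (F i0 i0) (F i0 i1) (F i0 i2) (F i1 i0) (F i1 i1) (F i1 i2) (F i2 i0) (F i2 i1) (F i2 i2).
by rewrite !mxE.
Qed.

Lemma adj_mx3 a b c d e f g h k :
  \adj (mx3 a b c d e f g h k) =
  mx3 (e*k - f*h) (c*h - b*k) (b*f - c*e)
      (f*g - d*k) (a*k - c*g) (c*d - a*f)
      (d*h - e*g) (b*g - a*h) (a*e - b*d).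
Proof.
apply/matrixP => i j; rewrite !mxE /cofactor det2E !mxE.
by case: i => [[|[|[|i]]] Hi] //; case: j => [[|[|[|j]]] Hj] //=; ring.
Qed.

Definition upper3 M := [/\ M i1 i0 = 0, M i2 i0 = 0 & M i2 i1 = 0].

Lemma upper3E M : upper3 M ->
  M = mx3 (M i0 i0) (M i0 i1) (M i0 i2) 0 (M i1 i1) (M i1 i2) 0 0 (M i2 i2).
Proof. by case=> h10 h20 h21; rewrite {1}[M]mx3E h10 h20 h21. Qed.

Lemma upper3_mx3 a b c e f k : upper3 (mx3 a b c 0 e f 0 0 k).
Proof. by split; rewrite mxE. Qed.

Lemma upper3_mul T M : upper3 T -> upper3 M -> upper3 (T *m M).
Proof.
by move=> /upper3E -> /upper3E ->; rewrite mul_mx3; split; rewrite mxE /=; ring.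
Qed.

Lemma upper3_adj M : upper3 M -> upper3 (\adj M).
Proof. by move=> /upper3E ->; rewrite adj_mx3; split; rewrite mxE /=; ring. Qed.

Lemma upper3_mul_row2 T M j : upper3 T -> (T *m M) i2 j = T i2 i2 * M i2 j.
Proof.
move=> /upper3E ->; rewrite [M]mx3E mul_mx3 !mxE.
by case: j => [[|[|[|j]]] Hj] //=; ring.
Qed.

Lemma upper3_mul_row1 T M j : upper3 T ->
  (T *m M) i1 j = T i1 i1 * M i1 j + T i1 i2 * M i2 j.
Proof.
move=> /upper3E ->; rewrite [M]mx3E mul_mx3 !mxE.
by case: j => [[|[|[|j]]] Hj] //=; ring.
Qed.

End ExplicitMatrices.

Lemma omega_sqr : omega ^+ 2 = -1 - omega.
Proof.
rewrite /omega; set s := 'i * sqrtC 3%:R.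
have s2 : s ^+ 2 = - 3%:R by rewrite /s exprMn sqrCi sqrtCK mulN1r.
have n2 : (2%:R : algC) != 0 by rewrite pnatr_eq0.
apply/eqP; rewrite -subr_eq0; apply/eqP.
have -> : ((-1 + s) / 2%:R) ^+ 2 - (-1 - (-1 + s) / 2%:R) = (s ^+ 2 + 3%:R) / 4%:R by field.
by rewrite s2 addNr mul0r.
Qed.

Definition eisen (a b : int) : algC := a%:~R + b%:~R * omega.

Definition eisen_norm (a b : int) : int := a * a - a * b + b * b.

Lemma eisenD a b c d : eisen a b + eisen c d = eisen (a + c) (b + d).
Proof. by rewrite /eisen !intrD; ring. Qed.

Lemma eisenN a b : - eisen a b = eisen (- a) (- b).
Proof. by rewrite /eisen !intrN; ring. Qed.

Lemma eisenM a b c d : eisen a b * eisen c d = eisen (a * c - b * d) (a * d + b * c - b * d).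
Proof.
have om2 : omega * omega = -1 - omega by rewrite -expr2 omega_sqr.
rewrite /eisen !(intrD, intrB, intrM).
transitivity (a%:~R * c%:~R + (a%:~R * d%:~R + b%:~R * c%:~R) * omega
   + b%:~R * d%:~R * (omega * omega) : algC); first by ring.
by rewrite om2; ring.
Qed.

Lemma eisen_mul_conj a b : eisen a b * eisen (a - b) (- b) = (eisen_norm a b)%:~R.
Proof.
rewrite eisenM /eisen /eisen_norm.
have -> : a * - b + b * (a - b) - b * - b = 0 by ring.
by rewrite mul0r addr0; congr (_ %:~R); ring.
Qed.

Lemma eisen_eq0 a b : eisen a b = 0 -> a = 0 /\ b = 0.
Proof.
move=> ab0; have := eisen_mul_conj a b.
rewrite ab0 mul0r => /esym/eqP; rewrite intr_eq0 /eisen_norm => /eqP N0.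
by split; nia.
Qed.

Lemma eisen_inj a b c d : eisen a b = eisen c d -> a = c /\ b = d.
Proof.
move=> E; have /eisen_eq0 [] : eisen (a - c) (b - d) = 0.
  by rewrite -[a - c]/(a + - c) -[b - d]/(b + - d) -eisenD -eisenN E subrr.
by move=> /eqP; rewrite subr_eq0 => /eqP -> /eqP; rewrite subr_eq0 => /eqP ->.
Qed.

Lemma inO_eisen a b : inO (eisen a b).
Proof. by exists a, b. Qed.

Lemma inOD x y : inO x -> inO y -> inO (x + y).
Proof. by move=> [a [b ->]] [c [d ->]]; rewrite eisenD; apply: inO_eisen. Qed.

Lemma inON x : inO x -> inO (- x).
Proof. by move=> [a [b ->]]; rewrite eisenN; apply: inO_eisen. Qed.

Lemma inOM x y : inO x -> inO y -> inO (x * y).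
Proof. by move=> [a [b ->]] [c [d ->]]; rewrite eisenM; apply: inO_eisen. Qed.

Lemma inO_int (z : int) : inO z%:~R.
Proof. by exists z, 0; rewrite mul0r addr0. Qed.

Lemma inO_nat n : inO n%:R.
Proof. exact: (inO_int n). Qed.

Lemma inO0 : inO 0.
Proof. exact: (inO_int 0). Qed.

Lemma inO1 : inO 1.
Proof. exact: (inO_int 1). Qed.

Lemma inO_omega : inO omega.
Proof. by exists 0, 1; rewrite add0r mul1r. Qed.

Lemma unitO1 : unitO 1.
Proof. by split; [exact: inO1 | exists 1; split; [exact: inO1 | rewrite mulr1]]. Qed.

Ltac inO_auto :=
  repeat first [ assumption | exact: inO0 | exact: inO1 | exact: inO_nat | exact: inO_int
               | exact: inO_omega | exact: inO_eisen | apply: inOD | apply: inON | apply: inOM ].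

Lemma divz_nearest (s n : int) : 0 < n ->
  exists k r, [/\ s = k * n + r, - n <= 2 * r & 2 * r <= n].
Proof.
move=> n_gt0.
have := divz_eq (2 * s + n) (2 * n).
have := @modz_ge0 (2 * s + n) (2 * n) ltac:(lia).
have := @ltz_pmod (2 * s + n) (2 * n) ltac:(lia).
set k := ((2 * s + n) %/ (2 * n))%Z; set m := ((2 * s + n) %% (2 * n))%Z => m_lt m_ge E.
by exists k, (s - k * n); split; [ring | nia | nia].
Qed.

Lemma eisen_euclid a b c d : (c, d) <> (0, 0) ->
  exists k1 k2 r1 r2,
    eisen a b = eisen k1 k2 * eisen c d + eisen r1 r2 /\ eisen_norm r1 r2 < eisen_norm c d.
Proof.
move=> cd_neq0; set n := eisen_norm c d.
have n_gt0 : 0 < n.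
  have : ~ (c = 0 /\ d = 0) by move=> [c0 d0]; apply: cd_neq0; rewrite c0 d0.
  by rewrite /n /eisen_norm; nia.
(* round the coordinates of the exact quotient (a + b omega) (c + d omega^2) / n *)
have [k1 [s [Es s_lo s_hi]]] := divz_nearest (a * c - a * d + b * d) n_gt0.
have [k2 [t [Et t_lo t_hi]]] := divz_nearest (b * c - a * d) n_gt0.
exists k1, k2, (a - (k1 * c - k2 * d)), (b - (k1 * d + k2 * c - k2 * d)); split.
  by rewrite eisenM eisenD; congr eisen; ring.
set r1 := a - _; set r2 := b - _.
have nN : n * (n * eisen_norm r1 r2) = n * (s * s - s * t + t * t).
  have -> : s = a * c - a * d + b * d - k1 * n by rewrite Es; ring.
  have -> : t = b * c - a * d - k2 * n by rewrite Et; ring.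
  by rewrite /n /eisen_norm /r1 /r2; ring.
have {}nN := mulfI (lt0r_neq0 n_gt0) nN.
have : 4 * (s * s - s * t + t * t) <= 3 * (n * n) by nia.
by nia.
Qed.

Definition unimodular (c d : algC) := exists p q, [/\ inO p, inO q & p * d - q * c = 1].

Lemma inO_factor_unimodular x y : inO x -> inO y ->
  exists l c d, [/\ inO l, inO c, inO d, unimodular c d & x = l * c /\ y = l * d].
Proof.
move=> [a [b ->]] [c [d ->]].
suff bound (n : nat) a' b' c' d' : eisen_norm c' d' < n%:Z ->
    exists l x y, [/\ inO l, inO x, inO y, unimodular x y
                    & eisen a' b' = l * x /\ eisen c' d' = l * y].
  by apply: (bound `|eisen_norm c d|.+1); rewrite /eisen_norm; nia.
elim: n a' b' c' d' => [|n IHn] {}a {}b {}c {}d ltn; first by move: ltn; rewrite /eisen_norm; nia.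
have [[c0 d0] | /eqP cd_neq0] := eqVneq (c, d) (0, 0).
- exists (eisen a b), 1, 0; split; inO_auto.
    by exists 0, (-1); split; inO_auto; ring.
  by rewrite c0 d0 /eisen !mul0r !addr0 mulr1 mulr0.
have [k1 [k2 [r1 [r2 [Eab Nr]]]]] := eisen_euclid a b cd_neq0.
have [l [u [v [inl inu inv [p [q [inp inq pq]]] [Ecd Er]]]]] := IHn c d r1 r2 ltac:(lia).
exists l, (eisen k1 k2 * u + v), u; split; try inO_auto.
- by exists (- q - p * eisen k1 k2), (- p); split; inO_auto; rewrite -pq; ring.
- by rewrite Eab Ecd Er; split; ring.
Qed.

Lemma R3_inO x : R3 x -> inO x.
Proof. by move=> [a [b [_ [_ ->]]]]; inO_auto. Qed.

Lemma R3_reduce x : inO x -> exists r k, [/\ R3 r, inO k & x = r + 3%:R * k].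
Proof.
move=> [a [b ->]].
have ea := divz_eq a 3; have eb := divz_eq b 3.
have la := @modz_ge0 a 3 isT; have lb := @modz_ge0 b 3 isT.
have ua := @ltz_pmod a 3 isT; have ub := @ltz_pmod b 3 isT.
set qa := (a %/ 3)%Z in ea *; set qb := (b %/ 3)%Z in eb *.
set ra := (a %% 3)%Z in ea la ua *; set rb := (b %% 3)%Z in eb lb ub *.
clearbody qa qb ra rb.
exists (eisen ra rb), (eisen qa qb); split; inO_auto.
- exists `|ra|%N, `|rb|%N; rewrite -!ltz_nat !gez0_abs //.
  by split=> //; rewrite /eisen !pmulrn !gez0_abs.
- rewrite [in LHS]ea [in LHS]eb /eisen !intrD !intrM; ring.
Qed.

Lemma R3_eq_mod3 x x' : R3 x -> R3 x' -> dvdO 3%:R (x - x') -> x = x'.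
Proof.
move=> [a [b [lta [ltb ->]]]] [a' [b' [lta' [ltb' ->]]]] [_ [[e [f ->]] E]].
have : eisen (a%:Z - a'%:Z) (b%:Z - b'%:Z) = eisen (3 * e) (3 * f).
  have -> : eisen (a%:Z - a'%:Z) (b%:Z - b'%:Z) = a%:R + b%:R * omega - (a'%:R + b'%:R * omega).
    by rewrite /eisen !intrB; ring.
  by rewrite E /eisen !intrM; ring.
case/eisen_inj => Ea Eb.
by have [-> ->] : a = a' /\ b = b' by split; lia.
Qed.

Implicit Types (y z : 'M[algC]_2) (M T : 'M[algC]_3).

Definition mx_inO m n (M : 'M[algC]_(m, n)) := forall i j, inO (M i j).

Lemma mx_inO_mul m n p (A : 'M[algC]_(m, n)) (B : 'M[algC]_(n, p)) :
  mx_inO A -> mx_inO B -> mx_inO (A *m B).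
Proof.
move=> inA inB i j; rewrite mxE.
by elim/big_ind: _ => [|x y|k _]; inO_auto.
Qed.

Lemma mx_inO_mx3 a b c d e f g h k :
  inO a -> inO b -> inO c -> inO d -> inO e -> inO f -> inO g -> inO h -> inO k ->
  mx_inO (mx3 a b c d e f g h k).
Proof.
move=> ? ? ? ? ? ? ? ? ? i j; rewrite mxE.
by case: i => [[|[|[|i]]] Hi] //; case: j => [[|[|[|j]]] Hj].
Qed.

Lemma SL3o_mul g h : SL3o g -> SL3o h -> SL3o (g *m h).
Proof.
by move=> [ing dg] [inh dh]; split; [exact: mx_inO_mul | rewrite det_mulmx dg dh mulr1].
Qed.

Lemma SL3o_unitmx M : SL3o M -> M \in unitmx.
Proof. by move=> [_ detM]; rewrite unitmxE detM unitr1. Qed.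

Lemma phi1E y : phi1 y = mx3 (y j0 j0) (y j0 j1) 0 (y j1 j0) (y j1 j1) 0 0 0 1.
Proof.
apply/matrixP => i j; rewrite !mxE.
case: i => [[|[|[|i]]] Hi] //; case: j => [[|[|[|j]]] Hj] //=;
  by congr (y _ _); apply: val_inj; rewrite /= inordK.
Qed.

Lemma phi2E y : phi2 y = mx3 1 0 0 0 (y j0 j0) (y j0 j1) 0 (y j1 j0) (y j1 j1).
Proof.
apply/matrixP => i j; rewrite !mxE.
case: i => [[|[|[|i]]] Hi] //; case: j => [[|[|[|j]]] Hj] //=;
  by congr (y _ _); apply: val_inj; rewrite /= inordK.
Qed.

Lemma phi1M y z : phi1 (y *m z) = phi1 y *m phi1 z.
Proof. rewrite [y]mx2E [z]mx2E mul_mx2 !phi1E mul_mx3 !mxE /=; congr mx3; ring. Qed.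

Lemma phi2M y z : phi2 (y *m z) = phi2 y *m phi2 z.
Proof. rewrite [y]mx2E [z]mx2E mul_mx2 !phi2E mul_mx3 !mxE /=; congr mx3; ring. Qed.

Lemma phi1_1 : phi1 1%:M = 1%:M.
Proof. by rewrite phi1E mx3_1 !mxE. Qed.

Lemma phi2_1 : phi2 1%:M = 1%:M.
Proof. by rewrite phi2E mx3_1 !mxE. Qed.

Lemma phi1_adjK y : \det y = 1 -> phi1 (\adj y) *m phi1 y = 1%:M.
Proof. by move=> dy; rewrite -phi1M mul_adj_mx dy phi1_1. Qed.

Lemma phi2_adjK y : \det y = 1 -> phi2 (\adj y) *m phi2 y = 1%:M.
Proof. by move=> dy; rewrite -phi2M mul_adj_mx dy phi2_1. Qed.

Lemma SL3o_phi1 y : SL2o y -> SL3o (phi1 y).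
Proof.
move=> [iny dy]; rewrite phi1E; split; first by apply: mx_inO_mx3; inO_auto.
by rewrite det_mx3 -[RHS]dy det2E; ring.
Qed.

Lemma SL3o_phi2 y : SL2o y -> SL3o (phi2 y).
Proof.
move=> [iny dy]; rewrite phi2E; split; first by apply: mx_inO_mx3; inO_auto.
by rewrite det_mx3 -[RHS]dy det2E; ring.
Qed.

Lemma SL2o_adj y : SL2o y -> SL2o (\adj y).
Proof.
move=> [iny dy]; split; last by rewrite det2E adj2E !mxE /= -[RHS]dy det2E; ring.
rewrite adj2E => i j; rewrite mxE.
by case: i => [[|[|i]] Hi] //; case: j => [[|[|j]] Hj] //=; inO_auto.
Qed.

Lemma mulmx_phi1 M y r :
  [/\ (M *m phi1 y) r i0 = M r i0 * y j0 j0 + M r i1 * y j1 j0,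
      (M *m phi1 y) r i1 = M r i0 * y j0 j1 + M r i1 * y j1 j1
    & (M *m phi1 y) r i2 = M r i2].
Proof.
rewrite phi1E [M]mx3E mul_mx3 !mxE.
by case: r => [[|[|[|r]]] Hr] //=; split; ring.
Qed.

Lemma mulmx_phi2 M y r :
  [/\ (M *m phi2 y) r i0 = M r i0,
      (M *m phi2 y) r i1 = M r i1 * y j0 j0 + M r i2 * y j1 j0
    & (M *m phi2 y) r i2 = M r i1 * y j0 j1 + M r i2 * y j1 j1].
Proof.
rewrite phi2E [M]mx3E mul_mx3 !mxE.
by case: r => [[|[|[|r]]] Hr] //=; split; ring.
Qed.


Lemma mulmx_phi1_adj M y r mu : \det y = 1 ->
  M r i0 = mu * y j1 j0 -> M r i1 = mu * y j1 j1 ->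
  [/\ (M *m phi1 (\adj y)) r i0 = 0, (M *m phi1 (\adj y)) r i1 = mu
    & (M *m phi1 (\adj y)) r i2 = M r i2].
Proof.
move=> dety E0 E1; rewrite det2E in dety.
have [-> -> ->] := mulmx_phi1 M (\adj y) r; rewrite adj2E !mxE /= E0 E1.
by split=> //; [ring | apply: (eq_lincomb1 (k := mu) dety); ring].
Qed.

Lemma mulmx_phi2_adj M y r mu : \det y = 1 ->
  M r i1 = mu * y j1 j0 -> M r i2 = mu * y j1 j1 ->
  [/\ (M *m phi2 (\adj y)) r i0 = M r i0, (M *m phi2 (\adj y)) r i1 = 0
    & (M *m phi2 (\adj y)) r i2 = mu].
Proof.
move=> dety E1 E2; rewrite det2E in dety.
have [-> -> ->] := mulmx_phi2 M (\adj y) r; rewrite adj2E !mxE /= E1 E2.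
by split=> //; [ring | apply: (eq_lincomb1 (k := mu) dety); ring].
Qed.

Lemma dvdO3_inO x : dvdO 3%:R x -> inO x.
Proof. by move=> [q [inq ->]]; inO_auto. Qed.

Lemma Gamma_inf3P gam : Gamma_inf3 gam <->
  exists g1 g2 g3,
    [/\ dvdO 3%:R g1, dvdO 3%:R g2, dvdO 3%:R g3 & gam = mx3 1 g1 g2 0 1 g3 0 0 1].
Proof.
split=> [[low [diag up]] | [g1 [g2 [g3 [d1 d2 d3 ->]]]]].
  exists (gam i0 i1), (gam i0 i2), (gam i1 i2); split; try exact: up.
  by rewrite {1}[gam]mx3E; congr mx3; apply: diag || apply: low.
split; [|split] => [i j|i|i j]; rewrite mxE;
  by case: i => [[|[|[|i]]] Hi] //; try case: j => [[|[|[|j]]] Hj].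
Qed.

Lemma U3P u : U3 u <->
  exists u1 u2 u3, [/\ R3 u1, R3 u2, R3 u3 & u = mx3 1 u1 u2 0 1 u3 0 0 1].
Proof.
split=> [[low [diag up]] | [u1 [u2 [u3 [r1 r2 r3 ->]]]]].
  exists (u i0 i1), (u i0 i2), (u i1 i2); split; try exact: up.
  by rewrite {1}[u]mx3E; congr mx3; apply: diag || apply: low.
split; [|split] => [i j|i|i j]; rewrite mxE;
  by case: i => [[|[|[|i]]] Hi] //; try case: j => [[|[|[|j]]] Hj].
Qed.

Lemma D3P d : D3 d <->
  exists x y z : algC, [/\ inO x, inO y, inO z, x * y * z = 1 & d = mx3 x 0 0 0 y 0 0 0 z].
Proof.
split=> [[off [ind det]] | [x [y [z [inx iny inz xyz ->]]]]].
  exists (d i0 i0), (d i1 i1), (d i2 i2); split; try exact: ind; first exact: det.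
  by rewrite {1}[d]mx3E; congr mx3; apply: off.
split; [|split] => [i j|i|]; rewrite ?mxE //;
  by case: i => [[|[|[|i]]] Hi] //; try case: j => [[|[|[|j]]] Hj].
Qed.

Lemma Gamma_inf3_SL3o gam : Gamma_inf3 gam -> SL3o gam.
Proof.
move=> /Gamma_inf3P [g1 [g2 [g3 [d1 d2 d3 ->]]]].
by split; [apply: mx_inO_mx3; inO_auto; exact: dvdO3_inO | rewrite det_mx3; ring].
Qed.

Lemma U3_SL3o u : U3 u -> SL3o u.
Proof.
move=> /U3P [u1 [u2 [u3 [r1 r2 r3 ->]]]].
by split; [apply: mx_inO_mx3; inO_auto; exact: R3_inO | rewrite det_mx3; ring].
Qed.

Lemma D3_SL3o d : D3 d -> SL3o d.
Proof.
move=> /D3P [x [y [z [inx iny inz xyz ->]]]].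
by split; [apply: mx_inO_mx3; inO_auto | rewrite det_mx3 -xyz; ring].
Qed.

Lemma GammaUD_borel gam u d : Gamma_inf3 gam -> U3 u -> D3 d ->
  SL3o (gam *m u *m d) /\ upper3 (gam *m u *m d).
Proof.
move=> Ggam Uu Dd; split.
  apply: SL3o_mul; last exact: D3_SL3o.
  by apply: SL3o_mul; [exact: Gamma_inf3_SL3o | exact: U3_SL3o].
move: Ggam Uu Dd => /Gamma_inf3P [g1 [g2 [g3 [_ _ _ ->]]]] /U3P [u1 [u2 [u3 [_ _ _ ->]]]].
move=> /D3P [x [y [z [_ _ _ _ ->]]]].
by apply: upper3_mul; [apply: upper3_mul|]; apply: upper3_mx3.
Qed.

Lemma borel_decomposition B : SL3o B -> upper3 B ->
  exists gam u d, [/\ Gamma_inf3 gam, U3 u, D3 d & B = gam *m u *m d].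
Proof.
move=> [inB detB] /upper3E EB; rewrite EB det_mx3 in detB.
move: (inB i0 i0) (inB i0 i1) (inB i0 i2) (inB i1 i1) (inB i1 i2) (inB i2 i2) EB detB.
move: (B i0 i0) (B i0 i1) (B i0 i2) (B i1 i1) (B i1 i2) (B i2 i2) => p q r s t v.
move=> inp inq inr ins int inv -> detB.
have psv : p * s * v = 1 by rewrite -detB; ring.
(* B d^-1, d = diag(p, s, v), is unipotent with entries q p v, r p s, t p s: reduce them mod 3 *)
have [u1 [k1 [R1 ink1 E1]]] := @R3_reduce (q * p * v) ltac:(inO_auto).
have [u2 [k2 [R2 ink2 E2]]] := @R3_reduce (r * p * s) ltac:(inO_auto).
have [u3 [k3 [R3' ink3 E3]]] := @R3_reduce (t * p * s) ltac:(inO_auto).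
exists (mx3 1 (3%:R * k1) (3%:R * k2 - 3%:R * k1 * u3) 0 1 (3%:R * k3) 0 0 1),
  (mx3 1 u1 u2 0 1 u3 0 0 1), (mx3 p 0 0 0 s 0 0 0 v); split.
- apply/Gamma_inf3P; do 3!eexists; split; last reflexivity.
  + by exists k1; split.
  + exists (k2 - k1 * u3); split; last by ring.
    by have inu3 := R3_inO R3'; inO_auto.
  + by exists k3; split.
- by apply/U3P; do 3!eexists; split; last reflexivity.
- by apply/D3P; do 3!eexists; split; last reflexivity.
- have -> : u1 = q * p * v - 3%:R * k1 by rewrite E1; ring.
  have -> : u2 = r * p * s - 3%:R * k2 by rewrite E2; ring.
  have -> : u3 = t * p * s - 3%:R * k3 by rewrite E3; ring.
  rewrite !mul_mx3; congr mx3; try ring.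
  + by apply: (eq_lincomb1 (k := - q) psv); ring.
  + by apply: (eq_lincomb1 (k := - r) psv); ring.
  + by apply: (eq_lincomb1 (k := - t) psv); ring.
Qed.

Lemma GammaU_uniq gam u gam' u' : Gamma_inf3 gam -> U3 u -> Gamma_inf3 gam' -> U3 u' ->
  gam *m u = gam' *m u' -> u = u'.
Proof.
move=> /Gamma_inf3P [g1 [g2 [g3 [[q1 [inq1 ->]] [q2 [inq2 ->]] [q3 [inq3 ->]] ->]]]].
move=> /U3P [u1 [u2 [u3 [r1 r2 r3 ->]]]].
move=> /Gamma_inf3P [g1' [g2' [g3' [[q1' [inq1' ->]] [q2' [inq2' ->]] [q3' [inq3' ->]] ->]]]].
move=> /U3P [u1' [u2' [u3' [r1' r2' r3' ->]]]].
rewrite !mul_mx3 => /mx3_inj [_ e01 e02 _ [_ e12 _ _ _]].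
have inu3 := R3_inO r3.
have E1 : u1 = u1'.
  apply: R3_eq_mod3 => //; exists (q1' - q1); split; first by inO_auto.
  by apply: (eq_lincomb1 (k := 1) e01); ring.
have E3 : u3 = u3'.
  apply: R3_eq_mod3 => //; exists (q3' - q3); split; first by inO_auto.
  by apply: (eq_lincomb1 (k := 1) e12); ring.
subst u1' u3'.
have E2 : u2 = u2'.
  apply: R3_eq_mod3 => //; exists ((q1' - q1) * u3 + q2' - q2); split; first by inO_auto.
  by apply: (eq_lincomb1 (k := 1) e02); ring.
by rewrite E2.
Qed.

Lemma borel_decomposition_uniq gam u d gam' u' d' :
  Gamma_inf3 gam -> U3 u -> D3 d -> Gamma_inf3 gam' -> U3 u' -> D3 d' ->
  gam *m u *m d = gam' *m u' *m d' -> u = u' /\ d = d'.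
Proof.
move=> Ggam Uu Dd Ggam' Uu' Dd' E.
have Ed : d = d'.
  move: (Ggam) (Uu) (Ggam') (Uu') (Dd) (Dd') (E).
  move=> /Gamma_inf3P [g1 [g2 [g3 [_ _ _ ->]]]] /U3P [u1 [u2 [u3 [_ _ _ ->]]]].
  move=> /Gamma_inf3P [g1' [g2' [g3' [_ _ _ ->]]]] /U3P [u1' [u2' [u3' [_ _ _ ->]]]].
  move=> /D3P [x [y [z [_ _ _ _ ->]]]] /D3P [x' [y' [z' [_ _ _ _ ->]]]].
  rewrite !mul_mx3 => /mx3_inj [ex _ _ _ [ey _ _ _ ez]].
  by congr mx3; [apply: (eq_lincomb1 (k := 1) ex) | apply: (eq_lincomb1 (k := 1) ey)
                | apply: (eq_lincomb1 (k := 1) ez)]; ring.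
split=> //; apply: (GammaU_uniq Ggam Uu Ggam' Uu').
by apply: (can_inj (mulmxK (SL3o_unitmx (D3_SL3o Dd)))); rewrite /= E Ed.
Qed.

Lemma SL2o_bottom_row_unit y y' : SL2o y -> SL2o y' ->
  y' j1 j0 * y j1 j1 = y' j1 j1 * y j1 j0 ->
  exists2 e, unitO e & y' j1 j0 = e * y j1 j0 /\ y' j1 j1 = e * y j1 j1.
Proof.
move=> [iny dety] [iny' dety'] cross; rewrite det2E in dety; rewrite det2E in dety'.
set e := y j0 j0 * y' j1 j1 - y j0 j1 * y' j1 j0.
have Ec : y' j1 j0 = e * y j1 j0.
  by apply: (eq_lincomb2 (k1 := - y' j1 j0) (k2 := y j0 j0) dety cross); rewrite /e; ring.
have Ed : y' j1 j1 = e * y j1 j1.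
  by apply: (eq_lincomb2 (k1 := - y' j1 j1) (k2 := y j0 j1) dety cross); rewrite /e; ring.
exists e => //; split; first by rewrite /e; inO_auto.
exists (y' j0 j0 * y j1 j1 - y' j0 j1 * y j1 j0); split; first by inO_auto.
by apply: (eq_lincomb3 (k1 := - y' j0 j0) (k2 := y' j0 j1) (k3 := 1) Ed Ec dety'); ring.
Qed.

Definition piece_u (p : piece) : 'M[algC]_3 :=
  match p with P1 u _ _ | P2 u _ _ _ | P3 u _ _ _ _ => u end.

Definition piece_d (p : piece) : 'M[algC]_3 :=
  match p with P1 _ d _ | P2 _ d _ _ | P3 _ d _ _ _ => d end.

Definition piece_word (p : piece) : 'M[algC]_3 :=
  match p with
  | P1 _ _ y => phi1 y
  | P2 _ _ y2 y1 => phi2 y2 *m phi1 y1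
  | P3 _ _ y3 y2 y1 => phi1 y3 *m (phi2 y2 *m phi1 y1)
  end.

Definition piece_ys (p : piece) : seq 'M[algC]_2 :=
  match p with
  | P1 _ _ y => [:: y]
  | P2 _ _ y2 y1 => [:: y2; y1]
  | P3 _ _ y3 y2 y1 => [:: y3; y2; y1]
  end.

Lemma piece_mxE p : piece_mx p = piece_u p *m piece_d p *m piece_word p.
Proof. by case: p => //= u d y3 y2 y1; rewrite !mulmxA. Qed.

Lemma piece_word_ys p q : piece_ys p = piece_ys q -> piece_word p = piece_word q.
Proof. by case: p => [???|????|?????]; case: q => [???|????|?????] //= [] *; subst. Qed.

Lemma piece_eq p q :
  piece_u p = piece_u q -> piece_d p = piece_d q -> piece_ys p = piece_ys q -> p = q.
Proof.
by case: p => [???|????|?????]; case: q => [???|????|?????] //= -> -> [] *; subst.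
Qed.

Lemma phi1_mul_row2 y M j : (phi1 y *m M) i2 j = M i2 j.
Proof. by rewrite phi1E [M]mx3E mul_mx3 !mxE; case: j => [[|[|[|j]]] Hj] //=; ring. Qed.

Lemma phi21_row2 y2 y1 :
  [/\ (phi2 y2 *m phi1 y1) i2 i0 = y2 j1 j0 * y1 j1 j0,
      (phi2 y2 *m phi1 y1) i2 i1 = y2 j1 j0 * y1 j1 j1
    & (phi2 y2 *m phi1 y1) i2 i2 = y2 j1 j1].
Proof. by have [-> -> ->] := mulmx_phi1 (phi2 y2) y1 i2; rewrite phi2E !mxE /=; split; ring. Qed.

Section Representatives.

Variables (Cs : algC -> Prop) (As : algC -> algC -> Prop).
Hypothesis hCs : reps_nonzero_mod_units Cs.
Hypothesis hAs : forall c, Cs c -> reps_mod c (As c).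

Local Notation Y := (Yo Cs As).

Lemma Cs_neq0 c : Cs c -> c != 0.
Proof. by move=> /hCs.1 [_ c_neq0]; apply/eqP. Qed.

Lemma Cs_unit_eq c c' e : Cs c -> Cs c' -> unitO e -> c' = e * c -> c = c'.
Proof.
move=> Cc Cc' ue Ec'.
have [inc' c'_neq0] := hCs.1 c' Cc'.
have [z [_ uniq]] := hCs.2 c' inc' c'_neq0.
rewrite -(uniq c') ?(uniq c) //; split=> //; first by exists e.
by exists 1; split; [exact: unitO1 | rewrite mul1r].
Qed.

Lemma Yo_SL2o y : Y y -> SL2o y.
Proof.
case=> [[Sy _] // | ->]; split; last exact: det1.
by move=> i j; rewrite mxE; case: (i == j); inO_auto.
Qed.

Lemma Yo_neq1 y : Y y -> y != 1%:M -> Cs (y j1 j0) /\ As (y j1 j0) (y j0 j0).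
Proof. by case=> [[_ []] // | ->]; rewrite eqxx. Qed.

Lemma Yo_bottom_left_eq0 y : Y y -> y j1 j0 = 0 -> y = 1%:M.
Proof.
move=> Yy c0; apply/eqP; apply: contraT => /(Yo_neq1 Yy) [Cc _].
by move: (Cs_neq0 Cc); rewrite c0 eqxx.
Qed.

Lemma neq1_of_bottom_left y : y j1 j0 != 0 -> y != 1%:M.
Proof. by apply: contraNneq => ->; rewrite mxE. Qed.

Lemma Yo_eq_same_bottom_row y y' : Y y -> Y y' -> y j1 j0 != 0 ->
  y' j1 j0 = y j1 j0 -> y' j1 j1 = y j1 j1 -> y = y'.
Proof.
move=> Yy Yy' c_neq0 Ec Ed.
have [Cc Aa] := Yo_neq1 Yy (neq1_of_bottom_left c_neq0).
have c'_neq0 : y' j1 j0 != 0 by rewrite Ec.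
have [_ Aa'] := Yo_neq1 Yy' (neq1_of_bottom_left c'_neq0).
have [[iny dety] [iny' dety']] := (Yo_SL2o Yy, Yo_SL2o Yy').
rewrite det2E in dety; rewrite det2E Ec Ed in dety'.
rewrite Ec in Aa'.
have Ea : y j0 j0 = y' j0 j0.
  have [inA uniqA] := hAs Cc.
  have [a0 [_ a0_uniq]] := uniqA _ (iny' j0 j0).
  rewrite -(a0_uniq (y' j0 j0)) ?(a0_uniq (y j0 j0)) //; split=> //.
    exists (y j0 j0 * (y' j0 j1 - y j0 j1) - (y' j0 j0 - y j0 j0) * y j0 j1).
    split; first by inO_auto.
    by apply: (eq_lincomb2 (k1 := - y' j0 j0) (k2 := y j0 j0) dety dety'); ring.
  by exists 0; split; [exact: inO0 | rewrite subrr mulr0].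
have Eb : y j0 j1 = y' j0 j1.
  rewrite -Ea in dety'; apply: (mulIf c_neq0).
  by apply: (eq_lincomb2 (k1 := -1) (k2 := 1) dety dety'); ring.
by rewrite [y]mx2E [y']mx2E Ea Eb Ec Ed.
Qed.

Lemma Yo_proportional_bottom_eq y y' : Y y -> Y y' ->
  y' j1 j0 * y j1 j1 = y' j1 j1 * y j1 j0 -> y = y'.
Proof.
move=> Yy Yy' cross.
have [e ue [Ec Ed]] := SL2o_bottom_row_unit (Yo_SL2o Yy) (Yo_SL2o Yy') cross.
have [c0 | c_neq0] := eqVneq (y j1 j0) 0.
  have c'0 : y' j1 j0 = 0 by rewrite Ec c0 mulr0.
  by rewrite (Yo_bottom_left_eq0 Yy c0) (Yo_bottom_left_eq0 Yy' c'0).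
have c'_neq0 : y' j1 j0 != 0.
  apply: contraNneq c_neq0 => c'0; have [_ [e' [_ ee']]] := ue.
  have : e' * (e * y j1 j0) = 0 by rewrite -Ec c'0 mulr0.
  by rewrite mulrA [e' * e]mulrC ee' mul1r => /eqP.
have [Cc _] := Yo_neq1 Yy (neq1_of_bottom_left c_neq0).
have [Cc' _] := Yo_neq1 Yy' (neq1_of_bottom_left c'_neq0).
have Ecc := Cs_unit_eq Cc Cc' ue Ec.
have e1 : e = 1 by apply: (mulIf c_neq0); rewrite -Ec mul1r.
by apply: Yo_eq_same_bottom_row => //; rewrite ?Ed e1 mul1r.
Qed.

Lemma Yo_exists_bottom_row c0 d0 : inO c0 -> inO d0 -> unimodular c0 d0 ->
  exists2 y, Y y & exists2 e, unitO e & c0 = e * y j1 j0 /\ d0 = e * y j1 j1.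
Proof.
move=> inc0 ind0 [p [q [inp inq pq]]].
have [c00 | c0_neq0] := eqVneq c0 0.
  exists 1%:M; first by right.
  exists d0; last by rewrite !mxE /= c00 mulr0 mulr1.
  by split=> //; exists p; split=> //; rewrite mulrC -pq c00 mulr0 subr0.
have [cc [[Ccc [u [[inu [u' [inu' uu']]] Ec0]]] _]] := hCs.2 c0 inc0 (elimN eqP c0_neq0).
have incc := (hCs.1 cc Ccc).1.
have [inA uniqA] := hAs Ccc.
have [a [[Aa [k [ink Ek]]] _]] := uniqA (p * u) ltac:(inO_auto).
have ina := inA a Aa.
set d := u' * d0; set b := q * u - k * d.
exists (mx2 a b cc d); last first.
  exists u; first by split=> //; exists u'.
  by rewrite !mxE /= /d mulrA uu' mul1r.
left; split; last by rewrite !mxE.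
split=> [i j|].
  by rewrite mxE; case: i => [[|[|i]] Hi] //; case: j => [[|[|j]] Hj] //=; inO_auto.
rewrite det_mx2 /b /d; rewrite Ec0 in pq.
have Ea : a = p * u - cc * k by rewrite -Ek; ring.
by rewrite Ea; apply: (eq_lincomb2 (k1 := 1) (k2 := p * d0) pq uu'); ring.
Qed.

Lemma Yo_factor_pair (x z : algC) : inO x -> inO z ->
  exists mu y, [/\ inO mu, Y y, x = mu * y j1 j0 & z = mu * y j1 j1].
Proof.
move=> inx inz.
have [l [c [d [inl inc ind cd [Ex Ez]]]]] := inO_factor_unimodular inx inz.
have [y Yy [e [ine _] [Ec Ed]]] := Yo_exists_bottom_row inc ind cd.
by exists (l * e), y; split; [inO_auto | | rewrite Ex Ec mulrA | rewrite Ez Ed mulrA].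
Qed.

Lemma SL3o_clear_middle_row h : SL3o h -> h i2 i0 = 0 -> h i2 i1 = 0 ->
  exists2 y, Y y & exists2 B, SL3o B /\ upper3 B & h = B *m phi1 y.
Proof.
move=> Sh h20 h21.
have [mu [y [_ Yy E0 E1]]] := Yo_factor_pair (Sh.1 i1 i0) (Sh.1 i1 i1).
have Sy := Yo_SL2o Yy; have dety := Sy.2.
exists y => //; exists (h *m phi1 (\adj y)).
  split; first exact/SL3o_mul/SL3o_phi1/SL2o_adj.
  have [B10 _ _] := mulmx_phi1_adj dety E0 E1.
  have E20 : h i2 i0 = 0 * y j1 j0 by rewrite h20 mul0r.
  have E21 : h i2 i1 = 0 * y j1 j1 by rewrite h21 mul0r.
  by have [B20 B21 _] := mulmx_phi1_adj dety E20 E21.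
by rewrite -mulmxA phi1_adjK // mulmx1.
Qed.

Lemma SL3o_clear_bottom_row g : SL3o g ->
  exists y2 y1 h, [/\ Y y2, Y y1, y2 = 1%:M -> y1 = 1%:M,
                     [/\ SL3o h, h i2 i0 = 0 & h i2 i1 = 0] & g = h *m (phi2 y2 *m phi1 y1)].
Proof.
move=> Sg.
have [mu1 [y1 [inmu1 Yy1 E0 E1]]] := Yo_factor_pair (Sg.1 i2 i0) (Sg.1 i2 i1).
have [mu1_0 | mu1_neq0] := eqVneq mu1 0.
  exists 1%:M, 1%:M, g; split=> //; try by right.
    by split=> //; rewrite ?E0 ?E1 mu1_0 mul0r.
  by rewrite phi2_1 phi1_1 !mulmx1.
have Sy1 := Yo_SL2o Yy1; have dety1 := Sy1.2.
have [g10 g11 g12] := mulmx_phi1_adj dety1 E0 E1.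
set g1 := g *m phi1 (\adj y1) in g10 g11 g12.
have [mu2 [y2 [_ Yy2 F1 F2]]] := Yo_factor_pair inmu1 (Sg.1 i2 i2).
have Sy2 := Yo_SL2o Yy2; have dety2 := Sy2.2.
rewrite -g11 in F1; rewrite -g12 in F2.
have [h20 h21 _] := mulmx_phi2_adj dety2 F1 F2.
exists y2, y1, (g1 *m phi2 (\adj y2)); split=> //.
- by move=> y2_1; move: mu1_neq0; rewrite -g11 F1 y2_1 mxE mulr0 eqxx.
- split=> //; last by rewrite h20 g10.
  apply: SL3o_mul; last exact/SL3o_phi2/SL2o_adj.
  by apply: SL3o_mul; last exact/SL3o_phi1/SL2o_adj.
- by rewrite -mulmxA [phi2 _ *m _]mulmxA phi2_adjK // mul1mx /g1 -mulmxA phi1_adjK // mulmx1.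
Qed.

Lemma pieces_cover g : SL3o g -> exists p, valid_piece Cs As p /\ in_piece p g.
Proof.
move=> Sg; have [y2 [y1 [h [Yy2 Yy1 y1_1 [Sh h20 h21] ->]]]] := SL3o_clear_bottom_row Sg.
have [y Yy [B [SB uB] ->]] := SL3o_clear_middle_row Sh h20 h21.
have [gam [u [d [Ggam Uu Dd ->]]]] := borel_decomposition SB uB.
have [y2_1 | /eqP y2_neq1] := eqVneq y2 1%:M.
  exists (P1 u d y); split => //; exists gam; split => //=.
  by rewrite y2_1 y1_1 // phi2_1 phi1_1 !mulmx1 !mulmxA.
have [y_1 | /eqP y_neq1] := eqVneq y 1%:M.
  exists (P2 u d y2 y1); split => //; exists gam; split => //=.
  by rewrite y_1 phi1_1 mulmx1 !mulmxA.
exists (P3 u d y y2 y1); split => //; exists gam; split => //=.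
by rewrite !mulmxA.
Qed.

Lemma phi1_upper3_inj T y y' : Y y -> Y y' -> upper3 T -> phi1 y' = T *m phi1 y -> y = y'.
Proof.
move=> Yy Yy' uT E.
have row1 j : phi1 y' i1 j = T i1 i1 * phi1 y i1 j + T i1 i2 * phi1 y i2 j.
  by rewrite E upper3_mul_row1.
move: (row1 i0) (row1 i1); rewrite !phi1E !mxE /= !mulr0 !addr0 => Ec Ed.
by apply: Yo_proportional_bottom_eq => //; rewrite Ec Ed; ring.
Qed.

Lemma Yo_phi1_upper3 y : Y y -> upper3 (phi1 y) -> y = 1%:M.
Proof. by move=> Yy [c0 _ _]; apply: Yo_bottom_left_eq0 => //; rewrite phi1E mxE in c0. Qed.

Lemma phi21_row2_neq0 y2 y1 : Y y2 -> y2 != 1%:M -> Y y1 ->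
  (phi2 y2 *m phi1 y1) i2 i0 = 0 -> (phi2 y2 *m phi1 y1) i2 i1 = 0 -> False.
Proof.
have [-> -> _] := phi21_row2 y2 y1 => Yy2 y2_neq1 Yy1 E0 E1.
have [Cc2 _] := Yo_neq1 Yy2 y2_neq1.
have dety1 := (Yo_SL2o Yy1).2; rewrite det2E in dety1.
apply: (elimN eqP (Cs_neq0 Cc2)).
apply: (eq_lincomb3 (k1 := - y1 j0 j1) (k2 := y1 j0 j0) (k3 := - y2 j1 j0) E0 E1 dety1).
by ring.
Qed.

Lemma phi21_row2_inj y2 y1 y2' y1' t : Y y2 -> Y y1 -> Y y2' -> Y y1' ->
  y2 != 1%:M -> y2' != 1%:M ->
  (forall j, (phi2 y2' *m phi1 y1') i2 j = t * (phi2 y2 *m phi1 y1) i2 j) ->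
  y2 = y2' /\ y1 = y1'.
Proof.
move=> Yy2 Yy1 Yy2' Yy1' y2_neq1 y2'_neq1 row.
move: (row i0) (row i1) (row i2).
have [-> -> ->] := phi21_row2 y2 y1; have [-> -> ->] := phi21_row2 y2' y1' => E0 E1 E2.
have c2'_neq0 := Cs_neq0 (Yo_neq1 Yy2' y2'_neq1).1.
have Ey1 : y1 = y1'.
  apply: Yo_proportional_bottom_eq => //; apply: (mulfI c2'_neq0).
  by rewrite !mulrA E0 E1; ring.
subst y1'; have dety1 := (Yo_SL2o Yy1).2; rewrite det2E in dety1.
have Ec2 : y2' j1 j0 = t * y2 j1 j0.
  apply: (eq_lincomb3 (k1 := - y1 j0 j1) (k2 := y1 j0 j0)
                      (k3 := - (y2' j1 j0 - t * y2 j1 j0)) E0 E1 dety1).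
  by ring.
by split=> //; apply: Yo_proportional_bottom_eq => //; rewrite Ec2 E2; ring.
Qed.

Lemma valid_piece_ud p : valid_piece Cs As p -> U3 (piece_u p) /\ D3 (piece_d p).
Proof. by case: p => [???|????|?????] /= [Uu [Dd _]]. Qed.

Lemma valid_piece_word p : valid_piece Cs As p -> SL3o (piece_word p).
Proof.
have SL1 y : Y y -> SL3o (phi1 y) by move=> /Yo_SL2o /SL3o_phi1.
have SL2 y : Y y -> SL3o (phi2 y) by move=> /Yo_SL2o /SL3o_phi2.
case: p => [???|????|?????] /=; first by move=> [_ [_ /SL1]].
  by move=> [_ [_ [/SL2 S2 [/SL1 S1 _]]]]; apply: SL3o_mul.
by move=> [_ [_ [/SL1 S3 [/SL2 S2 [/SL1 S1 _]]]]]; apply: SL3o_mul => //; apply: SL3o_mul.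
Qed.

Lemma phi21_unitmx y2 y1 : Y y2 -> Y y1 -> phi2 y2 *m phi1 y1 \in unitmx.
Proof.
by move=> /Yo_SL2o /SL3o_phi2 S2 /Yo_SL2o /SL3o_phi1 S1; apply/SL3o_unitmx/SL3o_mul.
Qed.

Lemma piece_ys_eq p q T : valid_piece Cs As p -> valid_piece Cs As q -> upper3 T ->
  (size (piece_ys p) <= size (piece_ys q))%N ->
  piece_word q = T *m piece_word p -> piece_ys p = piece_ys q.
Proof.
move=> + + uT; have row2 (W : 'M_3) j : (T *m W) i2 j = T i2 i2 * W i2 j.
  exact: upper3_mul_row2.
case: p => [u d y|u d y2 y1|u d y3 y2 y1];
  case: q => [u' d' y'|u' d' y2' y1'|u' d' y3' y2' y1'] //=.
- by move=> [_ [_ Yy]] [_ [_ Yy']] _ E; rewrite (phi1_upper3_inj Yy Yy' uT E).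
- move=> [_ [_ Yy]] [_ [_ [Yy2' [Yy1' /eqP y2'_neq1]]]] _ E.
  by case: (phi21_row2_neq0 Yy2' y2'_neq1 Yy1'); rewrite E row2 phi1E mxE /= mulr0.
- move=> [_ [_ Yy]] [_ [_ [_ [Yy2' [Yy1' [/eqP y2'_neq1 _]]]]]] _ E.
  case: (phi21_row2_neq0 Yy2' y2'_neq1 Yy1');
    by rewrite -(phi1_mul_row2 y3') E row2 phi1E mxE /= mulr0.
- move=> [_ [_ [Yy2 [Yy1 /eqP y2_neq1]]]] [_ [_ [Yy2' [Yy1' /eqP y2'_neq1]]]] _ E.
  have row j : (phi2 y2' *m phi1 y1') i2 j = T i2 i2 * (phi2 y2 *m phi1 y1) i2 j.
    by rewrite E row2.
  by have [-> ->] := phi21_row2_inj Yy2 Yy1 Yy2' Yy1' y2_neq1 y2'_neq1 row.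
- move=> [_ [_ [Yy2 [Yy1 /eqP y2_neq1]]]].
  move=> [_ [_ [Yy3' [Yy2' [Yy1' [/eqP y2'_neq1 y3'_neq1]]]]]] _ E.
  have row j : (phi2 y2' *m phi1 y1') i2 j = T i2 i2 * (phi2 y2 *m phi1 y1) i2 j.
    by rewrite -[LHS](phi1_mul_row2 y3') E row2.
  have [Ey2 Ey1] := phi21_row2_inj Yy2 Yy1 Yy2' Yy1' y2_neq1 y2'_neq1 row.
  subst y2' y1'.
  move/(can_inj (mulmxK (phi21_unitmx Yy2 Yy1))): E => E.
  by case: y3'_neq1; apply: Yo_phi1_upper3 => //; rewrite E.
- move=> [_ [_ [Yy3 [Yy2 [Yy1 [/eqP y2_neq1 _]]]]]].
  move=> [_ [_ [Yy3' [Yy2' [Yy1' [/eqP y2'_neq1 _]]]]]] _ E.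
  have row j : (phi2 y2' *m phi1 y1') i2 j = T i2 i2 * (phi2 y2 *m phi1 y1) i2 j.
    by rewrite -[LHS](phi1_mul_row2 y3') E row2 phi1_mul_row2.
  have [Ey2 Ey1] := phi21_row2_inj Yy2 Yy1 Yy2' Yy1' y2_neq1 y2'_neq1 row.
  subst y2' y1'; rewrite [RHS]mulmxA in E.
  move/(can_inj (mulmxK (phi21_unitmx Yy2 Yy1))): E => E.
  by rewrite (phi1_upper3_inj Yy3 Yy3' uT E).
Qed.

Lemma in_piece_SL3o p g : valid_piece Cs As p -> in_piece p g -> SL3o g.
Proof.
move=> vp [gam [Ggam ->]]; have [Uu Dd] := valid_piece_ud vp.
rewrite piece_mxE !mulmxA; apply: SL3o_mul (valid_piece_word vp).
exact: (GammaUD_borel Ggam Uu Dd).1.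
Qed.

Lemma pieces_disjoint p q g : valid_piece Cs As p -> valid_piece Cs As q ->
  in_piece p g -> in_piece q g -> p = q.
Proof.
wlog le_pq : p q / (size (piece_ys p) <= size (piece_ys q))%N.
  move=> wlog_le vp vq gp gq.
  have [le | /ltnW le] := leqP (size (piece_ys p)) (size (piece_ys q)); first exact: wlog_le.
  exact/esym/wlog_le.
move=> vp vq [gam [Ggam Eg]] [gam' [Ggam' Eg']].
have [Up Dp] := valid_piece_ud vp; have [Uq Dq] := valid_piece_ud vq.
have [SB uB] := GammaUD_borel Ggam Up Dp; have [SB' uB'] := GammaUD_borel Ggam' Uq Dq.
set B := gam *m _ *m _ in SB uB; set B' := gam' *m _ *m _ in SB' uB'.
have gB : g = B *m piece_word p by rewrite Eg piece_mxE /B !mulmxA.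
have gB' : g = B' *m piece_word q by rewrite Eg' piece_mxE /B' !mulmxA.
have Ew : piece_word q = (\adj B' *m B) *m piece_word p.
  by rewrite -mulmxA -gB gB' mulmxA mul_adj_mx SB'.2 mul1mx.
have Eys := piece_ys_eq vp vq (upper3_mul (upper3_adj uB') uB) le_pq Ew.
have EB : B = B'.
  apply: (can_inj (mulmxK (SL3o_unitmx (valid_piece_word vp)))).
  by rewrite /= -gB gB' (piece_word_ys Eys).
have [Eu Ed] := borel_decomposition_uniq Ggam Up Dp Ggam' Uq Dq EB.
exact: piece_eq.
Qed.

End Representatives.

Theorem theorem3p1
  (Cs : algC -> Prop) (As : algC -> algC -> Prop)
  (hCs : reps_nonzero_mod_units Cs)
  (hAs : forall c, Cs c -> reps_mod c (As c)) :
  (* every piece lies in SL_3(o) *)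
  (forall p g, valid_piece Cs As p -> in_piece p g -> SL3o g) /\
  (* the pieces cover SL_3(o) *)
  (forall g, SL3o g -> exists p, valid_piece Cs As p /\ in_piece p g) /\
  (* distinct pieces are disjoint *)
  (forall p q g, valid_piece Cs As p -> valid_piece Cs As q ->
     in_piece p g -> in_piece q g -> p = q).
Proof.
split; first by move=> p g; apply: in_piece_SL3o.
split; first by move=> g; exact: (pieces_cover hCs hAs).
by move=> p q g; exact: (pieces_disjoint hCs hAs).
Qed.
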